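(* Let $d=2b$ be even, $d\geq 4$. Then every half-edge of every $d$-branching mobile has even weight (in $\{0,\dots,d-2\}$). Similarly, for every face-rooted $d$-angulation admitting a $d/(d-2)$-orientation, its minimal $d/(d-2)$-orientation has only even weights.
   Context: A map is a connected finite graph (loops and multiple edges allowed) embedded in the oriented sphere up to orientation-preserving homeomorphism; a $d$-angulation has all faces of degree $d$. A face-rooted map has a marked root-face; vertices and edges incident to it are outer, others inner. A biorientation assigns to each half-edge a direction (ingoing toward its vertex, or outgoing); an edge is $i$-way if $i$ of its half-edges are ingoing. Directed paths follow 2-way edges or 1-way edges toward their ingoing half-edge; a circuit is a simple closed directed path; it is counterclockwise if the root-face is on its right; a biorientation is minimal if it has no counterclockwise circuit. An $\mathbb N$-biorientation gives weights in $\{0,1,2,\dots\}$ to half-edges, positive on ingoing and zero on outgoing ones; edge weight = sum of the two half-edge weights; vertex weight = sum of weights of incident ingoing half-edges. A $d/(d-2)$-orientation of a face-rooted $d$-angulation is an $\mathbb N$-biorientation with inner edges of weight $d-2$, inner vertices of weight $d$, outer edges of weight $1$, outer vertices of weight $1$; if one exists, there is a unique minimal one. A mobile is a plane tree whose vertices are black or white (not necessarily properly), black vertices possibly carrying dangling half-edges (buds). An $\mathbb N$-mobile gives each non-bud half-edge a weight in $\{0,1,2,\dots\}$, positive if incident to a white vertex, zero if incident to a black vertex; vertex weight = sum of weights of incident non-bud half-edges; black-vertex degree counts buds. A $d$-branching mobile is an $\mathbb N$-mobile with all black vertices of degree $d$, all white vertices of weight $d$, all edges of weight $d-2$. *)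

From HB Require Import structures.
From mathcomp Require Import all_boot all_fingroup.
Set Implicit Arguments. Unset Strict Implicit. Unset Printing Implicit Defensive.


(* Combinatorial maps.  A map is given by a finite set D of darts (half-     *)
(* edges), a permutation [sigma] giving the COUNTERCLOCKWISE cyclic order of *)
(* darts around each vertex, and a fixed-point-free involution [alpha]       *)
(* pairing the two half-edges of each edge.  Vertices = sigma-orbits, edges  *)
(* = alpha-orbits, faces = orbits of phi : h |-> sigma (alpha h).            *)
(* With sigma counterclockwise, the face (phi-orbit) of a dart h is the face *)
(* lying on the RIGHT of h when h is traversed from its own vertex towards   *)
(* the vertex of [alpha h].                                                  *)
(* Connected maps on the oriented sphere up to orientation-preserving        *)
(* homeomorphism correspond to such data satisfying connectivity and Euler's *)
(* formula V - E + F = 2.                                                    *)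

Section Maps.
Variable D : finType.
Variables sigma alpha : {perm D}.

(* phi h = sigma (alpha h)  (mathcomp: (s * t) x = t (s x)) *)
Definition phi : {perm D} := (alpha * sigma)%g.

Definition vertex_of (h : D) : {set D} := porbit sigma h.
Definition face_of (h : D) : {set D} := porbit phi h.
Definition edge_of (h : D) : {set D} := [set h; alpha h].

Definition map_rel : rel D := fun x y => (y == sigma x) || (y == alpha x).

Definition is_planar_map : Prop :=
  [/\ forall h, alpha (alpha h) = h,
      forall h, alpha h != h,
      forall x y, connect map_rel x y
    & #|porbits sigma| + #|porbits phi| = (#|D| %/ 2 + 2)%N].

Definition is_d_angulation (d : nat) : Prop :=
  forall h, #|face_of h| = d.

Variable r : D.
Definition root_face : {set D} := face_of r.

Definition outer_edge (h : D) : bool :=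
  (h \in root_face) || (alpha h \in root_face).
Definition outer_vertex (h : D) : bool :=
  [exists x in vertex_of h, x \in root_face].

(* An N-biorientation is a weight function w : D -> nat; a half-edge h is    *)
(* ingoing iff 0 < w h and outgoing iff w h = 0.                             *)
Variable w : D -> nat.

Definition edge_weight (h : D) : nat := w h + w (alpha h).
Definition vertex_weight (h : D) : nat := \sum_(x in vertex_of h) w x.

Definition is_d_dm2_orientation (d : nat) : Prop :=
  (forall h, edge_weight h = if outer_edge h then 1 else d - 2)
  /\ (forall h, vertex_weight h = if outer_vertex h then 1 else d).

(* A directed step along dart h goes from the vertex of h to the vertex of   *)
(* alpha h; it is allowed iff the half-edge alpha h (at the arrival vertex)  *)
(* is ingoing (2-way edges, or 1-way edges towards their ingoing half-edge). *)
Definition can_step (h : D) : bool := 0 < w (alpha h).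
Definition consecutive : rel D := fun x y => alpha x \in vertex_of y.

Definition is_circuit (s : seq D) : Prop :=
  [/\ s != [::], all can_step s, path.cycle consecutive s,
      uniq (map vertex_of s) & uniq (map edge_of s)].

Definition dual_rel_avoid (s : seq D) : rel D :=
  fun x y => (y == phi x) || ((y == alpha x) && (edge_of x \notin map edge_of s)).

(* the root face lies in the region on the right of the circuit, i.e. in the *)
(* region containing the right face of its first dart *)
Definition ccw_circuit (s : seq D) : Prop :=
  is_circuit s /\
  (match s with h :: _ => connect (dual_rel_avoid s) h r | [::] => false end).

Definition is_minimal : Prop := forall s, ~ ccw_circuit s.

End Maps.

(* Mobiles.  Darts D (half-edges, including buds), vertices V, vert : D -> V,*)
(* sigma = cyclic order around vertices (plane structure), alpha = involution*)
(* matching the two half-edges of each edge and fixing exactly the buds.      *)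
Section Mobiles.
Variables (D V : finType) (vert : D -> V) (sigma alpha : {perm D}).
Variables (bud : pred D) (black : pred V).

Definition tree_rel : rel V :=
  fun u v => [exists h, [&& ~~ bud h, vert h == u & vert (alpha h) == v]].

Definition is_mobile : Prop :=
  [/\ (forall h, alpha (alpha h) = h) /\ (forall h, (alpha h == h) = bud h),
      forall h, bud h -> black (vert h),
      forall h h', (vert h == vert h') = (h' \in porbit sigma h),
      forall u v, connect tree_rel u v
    & (#|[pred h | ~~ bud h]| + 2 = 2 * #|V|)%N ].

Variable w : D -> nat.

Definition is_N_mobile : Prop :=
  is_mobile /\ forall h, ~~ bud h -> (0 < w h) = ~~ black (vert h).

Definition mvertex_weight (v : V) : nat :=
  \sum_(h | (vert h == v) && ~~ bud h) w h.
Definition mdegree (v : V) : nat := #|[pred h | vert h == v]|.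

Definition is_d_branching (d : nat) : Prop :=
  [/\ is_N_mobile,
      forall v, black v -> mdegree v = d,
      forall v, ~~ black v -> mvertex_weight v = d
    & forall h, ~~ bud h -> w h + w (alpha h) = d - 2].

End Mobiles.

(* Weights are studied modulo 2.

   In a d-branching mobile the two halves of an edge have weights summing to d - 2, and every
   vertex has even weight (d at white vertices, 0 at black ones).  So the parities of the edges
   form a vector x over F_2 with x A = 0, where A is the edge-vertex incidence matrix of the
   underlying tree.  A tree is connected and has fewer edges than vertices, hence A has full row
   rank and x = 0.

   In a d-angulation with a d/(d-2)-orientation, Euler's formula, the two ways of counting the
   total weight (by vertices and by edges) and the connectedness of the boundary walk of the root
   face force every inner half-edge at an outer vertex to have weight 0.  Odd inner half-edges
   therefore sit at inner vertices, whose weight d is even, so they come in pairs around every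
   vertex as well as along every inner edge (of weight d - 2).  Following them from an odd
   half-edge yields a circuit of 2-way edges; this circuit or its reverse has the root face on
   its right, which contradicts minimality. *)

From mathcomp Require Import all_boot all_fingroup all_algebra.
From mathcomp Require Import zify.
Set Implicit Arguments. Unset Strict Implicit. Unset Printing Implicit Defensive.

Lemma even_subn2 d : ~~ odd d -> ~~ odd (d - 2).
Proof.
move=> d_even; rewrite -[d]odd_double_half (negbTE d_even) add0n.
by rewrite -(doubleB _ 1) odd_double.
Qed.

Lemma odd_sum_eq (I : finType) (P : pred I) (F G : I -> nat) :
  (forall i, P i -> odd (F i) = odd (G i)) ->
  odd (\sum_(i | P i) F i) = odd (\sum_(i | P i) G i).
Proof.
move=> FG; apply: (big_ind2 (fun m n => odd m = odd n)) => // m1 n1 m2 n2.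
by rewrite !oddD => -> ->.
Qed.

Lemma iter_key_cycle (T : Type) (K : finType) (g : T -> T) (c : T -> K) x :
  exists m n, let y := iter m g x in
    c (iter n.+1 g y) = c y /\ {in gtn n.+1 &, injective (fun k => c (iter k g y))}.
Proof.
pose f k := c (iter k g x).
have [j1 [i1 [lt_ij1 e1]]] : exists j i, i < j /\ f i = f j.
  have /injectivePn[a [b ne_ab fab]] : ~~ injectiveb (fun k : 'I_#|K|.+1 => f k).
    by apply/injectiveP => /leq_card; rewrite card_ord ltnn.
  case: (ltngtP a b) ne_ab => [lt_ab|lt_ba|/val_inj->]; last by rewrite eqxx.
    by exists b, a.
  by exists a, b.
have P_j1 : [exists i : 'I_j1, f i == f j1] by apply/existsP; exists (Ordinal lt_ij1); rewrite e1.
case: (ex_minnP (ex_intro (fun j => [exists i : 'I_j, f i == f j]) j1 P_j1)) => j0.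
move=> /existsP[[i0 lt_ij0] /= /eqP e0] min_j0.
have inj_f a b : a < j0 -> b < j0 -> f a = f b -> a = b.
  move=> lt_a lt_b fab; case: (ltngtP a b) => // [lt_ab|lt_ba].
    have : [exists i : 'I_b, f i == f b] by apply/existsP; exists (Ordinal lt_ab); rewrite fab.
    by move/min_j0; rewrite leqNgt lt_b.
  have : [exists i : 'I_a, f i == f a] by apply/existsP; exists (Ordinal lt_ba); rewrite fab.
  by move/min_j0; rewrite leqNgt lt_a.
exists i0, (j0 - i0).-1 => /=; rewrite -!iterD.
have j0E : (j0 - i0).-1.+1 + i0 = j0 by lia.
split; first by rewrite -iterS -addSn j0E; exact: esym e0.
have lt_j0 k : k < (j0 - i0).-1.+1 -> k + i0 < j0 by rewrite -{2}j0E ltn_add2r.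
move=> a b; rewrite !inE -!iterD => /lt_j0 lt_a /lt_j0 lt_b /(inj_f _ _ lt_a lt_b).
by move/eqP; rewrite eqn_add2r => /eqP.
Qed.

Lemma uniq_map_traject (T : Type) (U : eqType) (g : T -> T) (F : T -> U) y n :
  {in gtn n &, injective (fun k => F (iter k g y))} -> uniq (map F (traject g y n)).
Proof.
move=> inj; apply/(uniqP (F y)) => a b; rewrite !inE size_map size_traject => lt_a lt_b.
by rewrite !(nth_map y) ?size_traject // !nth_traject //; exact: inj.
Qed.

Lemma euler_outer_identity c F W Vo O Q S :
  Vo + W + F = (c + 2) * F + 2 -> 2 * (c + 2) * F = O + Q ->
  S = Vo + 2 * (c + 2) * W -> 2 * S = O + (2 * c + 2) * Q ->
  (2 * c + 3) * (2 * Vo) = 8 * (c + 2) + (2 * c + 1) * O.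
Proof.
move=> euler darts S_vtx S_edge.
have := f_equal (muln (4 * (c + 2))) euler.
have := f_equal (muln (2 * c + 2)) darts.
lia.
Qed.

Lemma euler_outer_key b Vo O : 2 <= b ->
  (2 * b - 1) * (2 * Vo) = 8 * b + (2 * b - 3) * O ->
  2 * Vo <= O + 2 -> O <= 4 * b -> 2 * Vo = O.
Proof.
move=> b_ge2 key le_Vo le_O.
have [le_VO|lt_OV] := leqP (2 * Vo) O.
  have O_eq : O = 4 * b.
    have : (2 * b - 1) * (2 * Vo) <= (2 * b - 1) * O by exact: leq_mul.
    nia.
  by subst O; nia.
have [e|e] : 2 * Vo = O + 1 \/ 2 * Vo = O + 2 by lia.
all: by rewrite e in key; nia.
Qed.

(* Vo, W count outer and inner vertices, F faces, O, Q outer and inner half-edges and S is the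
   total weight.  With d = 2b the equations give (2b - 1)(2 Vo) = 8b + (2b - 3) O, and the two
   bounds together with parity leave only 2 Vo = O. *)
Lemma outer_count_arith d F Vo W O Q S :
  ~~ odd d -> 4 <= d -> O + Q = d * F -> Vo + W + F = (O + Q) %/ 2 + 2 ->
  S = Vo + d * W -> 2 * S = O + (d - 2) * Q -> 2 * Vo <= O + 2 -> O <= 2 * d ->
  2 * Vo = O.
Proof.
move=> d_even d_ge4 darts euler S_vtx S_edge le_walk le_O.
have [c d_eq] : exists c, d = 2 * (c + 2).
  exists (d./2 - 2); move: (odd_double_half d); rewrite (negbTE d_even) add0n -mul2n; lia.
subst d; rewrite darts -mulnA mulKn // in euler.
have sub2 : 2 * (c + 2) - 2 = 2 * c + 2 by lia.
rewrite sub2 in S_edge.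
have key := euler_outer_identity euler (esym darts) S_vtx S_edge.
apply: (@euler_outer_key (c + 2) _ _ _ _ le_walk); first by rewrite leq_addl.
  have sub1 : 2 * (c + 2) - 1 = 2 * c + 3 by lia.
  have sub3 : 2 * (c + 2) - 3 = 2 * c + 1 by lia.
  by rewrite sub1 sub3.
by rewrite mulnA in le_O.
Qed.

Lemma connect_stable (T : finType) (e : rel T) (a : pred T) :
  (forall x y, a x -> e x y -> a y) -> forall x y, a x -> connect e x y -> a y.
Proof.
move=> stable x y ax /connectP[p]; elim: p x ax => [|z p IH] x ax /=; first by move=> _ ->.
by case/andP => xz; apply: IH; exact: stable xz.
Qed.

Lemma porbit_step (T : finType) (s : {perm T}) x y : x \in porbit s y -> s x \in porbit s y.
Proof.
by rewrite -eq_porbit_mem => /eqP <-; have := mem_porbit s 1 x; rewrite expg1.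
Qed.

Lemma big_porbits (R : Type) (idx : R) (op : Monoid.com_law idx)
    (T : finType) (s : {perm T}) (F : T -> R) :
  \big[op/idx]_h F h = \big[op/idx]_(O in porbits s) \big[op/idx]_(h in O) F h.
Proof.
rewrite (partition_big_imset (porbit s)) /=.
apply: eq_bigr => O /imsetP[y _ ->]; apply: eq_bigl => x.
by rewrite eq_porbit_mem.
Qed.

Section Walk.
Variables (T V : finType) (alpha : T -> T) (vtx : T -> V) (xs : nat -> T).
Hypothesis alphaK : involutive alpha.
Hypothesis alpha_neq : forall x, alpha x != x.
Hypothesis walk_step : forall i, vtx (xs i.+1) = vtx (alpha (xs i)).

Fixpoint walk_vertices k : {set V} :=
  if k is k'.+1 then vtx (xs k) |: walk_vertices k' else [set vtx (xs 0)].
Fixpoint walk_darts k : {set T} :=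
  if k is k'.+1 then xs k' |: (alpha (xs k') |: walk_darts k') else set0.

Lemma mem_walk_vertices k i : i <= k -> vtx (xs i) \in walk_vertices k.
Proof.
elim: k => [|k IH] /=; first by rewrite leqn0 => /eqP ->; rewrite inE.
rewrite leq_eqVlt => /orP[/eqP ->|lt_ik]; first by rewrite setU11.
by rewrite in_setU1 IH ?orbT.
Qed.

Lemma walk_dartsP k y :
  reflect (exists2 i, i < k & y = xs i \/ y = alpha (xs i)) (y \in walk_darts k).
Proof.
elim: k => [|k IH] /=; first by rewrite inE; constructor => -[].
rewrite !in_setU1; apply: (iffP or3P) => [[/eqP->|/eqP->|/IH[i lt_ik e]]|[i]].
- by exists k => //; left.
- by exists k => //; right.
- by exists i => //; exact: ltnW.
rewrite ltnS leq_eqVlt => /orP[/eqP-> [->|->]|lt_ik e]; [exact: Or31|exact: Or32|].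
by apply: Or33; apply/IH; exists i.
Qed.

Lemma card_walk_vertices k : 2 * #|walk_vertices k| <= #|walk_darts k| + 2.
Proof.
elim: k => [|k IH]; first by rewrite /= cards1 cards0.
rewrite /= cardsU1 !cardsU1.
case: (boolP (vtx (xs k.+1) \in walk_vertices k)) => new_v /=.
  by move: (xs k \notin _) (alpha (xs k) \notin _) IH => [] [] /=; lia.
have new_alpha : alpha (xs k) \notin walk_darts k.
  apply: contra new_v => /walk_dartsP[i lt_ik [e|e]].
    by rewrite walk_step e mem_walk_vertices // ltnW.
  by rewrite walk_step e -walk_step mem_walk_vertices.
have new_x : xs k \notin alpha (xs k) |: walk_darts k.
  rewrite in_setU1 negb_or eq_sym alpha_neq /=.
  apply: contra new_v => /walk_dartsP[i lt_ik [e|e]].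
    by rewrite walk_step e -walk_step mem_walk_vertices.
  by rewrite walk_step e alphaK mem_walk_vertices // ltnW.
by rewrite new_alpha new_x /=; lia.
Qed.

End Walk.

Section Circuits.
Variables (D : finType) (sigma alpha : {perm D}) (r : D) (w : D -> nat).
Hypothesis alphaK : involutive alpha.
Hypothesis map_connected : forall x y, connect (map_rel sigma alpha) x y.

Local Notation phi := (phi sigma alpha).
Local Notation vtx := (vertex_of sigma).
Local Notation edge := (edge_of alpha).
Local Notation circuit := (is_circuit sigma alpha w).
Local Notation dual s := (dual_rel_avoid sigma alpha s).

Let edgeA x : edge (alpha x) = edge x.
Proof. by apply/setP => y; rewrite !inE alphaK orbC. Qed.

Let mem_edges s x : (edge x \in map edge s) = (x \in s) || (alpha x \in s).
Proof.
apply/mapP/orP => [[t ts ext]|[xs|axs]]; last 2 first.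
- by exists x.
- by exists (alpha x); rewrite ?edgeA.
have : x \in edge t by rewrite -ext !inE eqxx.
by rewrite !inE => /orP[/eqP->|/eqP->]; [left | right; rewrite alphaK].
Qed.

Lemma circuit_rot s k : circuit s -> circuit (rot k s).
Proof.
case=> ne steps cyc uniq_v uniq_e; split.
- by rewrite -size_eq0 size_rot size_eq0.
- by apply/allP => x; rewrite mem_rot; exact: (allP steps).
- by rewrite rot_cycle.
- by rewrite map_rot rot_uniq.
- by rewrite map_rot rot_uniq.
Qed.

Let map_vtx_alpha x p : path (consecutive sigma alpha) x p ->
  map (vtx \o alpha) (belast x p) = map vtx p.
Proof.
elim: p x => [|y p IH] x //= /andP[xy p_path].
by rewrite (IH _ p_path) /=; congr (_ :: _); apply/eqP; rewrite eq_porbit_mem.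
Qed.

Lemma circuit_rev s : circuit s -> all (fun h => 0 < w h) s -> circuit (map alpha (rev s)).
Proof.
case=> ne _ cyc uniq_v uniq_e two_way; split.
- by rewrite -size_eq0 size_map size_rev size_eq0.
- by apply/allP => _ /mapP[t ts ->]; rewrite /can_step alphaK (allP two_way) // -mem_rev.
- rewrite cycle_map rev_cycle -(@eq_cycle _ (consecutive sigma alpha)) //.
  by move=> a b /=; rewrite /consecutive alphaK /vertex_of porbit_sym.
- rewrite -map_comp map_rev rev_uniq.
  case: s ne cyc uniq_v {two_way uniq_e} => // x p _ cyc uniq_v.
  by rewrite -(belast_rcons x p x) map_vtx_alpha // -rot1_cons map_rot rot_uniq.
- by rewrite -map_comp (eq_map edgeA) map_rev rev_uniq.
Qed.

Let dual_phi s u i : connect (dual s) u ((phi ^+ i)%g u).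
Proof.
elim: i => [|i IH]; first by rewrite expg0 perm1 connect0.
by apply: connect_trans IH (connect1 _); rewrite expgSr permM /dual_rel_avoid eqxx.
Qed.

Let dual_rev s x y : dual s x y -> connect (dual s) y x.
Proof.
case/orP => [/eqP-> | /andP[/eqP-> not_s]].
  have : x \in porbit phi (phi x) by rewrite porbit_sym porbit_step ?porbit_id.
  by case/porbitP => i {2}->; exact: dual_phi.
by apply: connect1; rewrite /dual_rel_avoid alphaK eqxx edgeA not_s orbT.
Qed.

Lemma dual_connect_sym s x y : connect (dual s) x y -> connect (dual s) y x.
Proof.
apply: (connect_stable (a := connect (dual s)^~ x)) => // u v ux /dual_rev vu.
exact: connect_trans vu ux.
Qed.

Let dual_eq s1 s2 : map edge s1 =i map edge s2 -> dual s1 =2 dual s2.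
Proof. by move=> e x y; rewrite /dual_rel_avoid e. Qed.

Lemma dual_region_meets_circuit s : s != [::] ->
  exists2 z, connect (dual s) r z & (z \in s) || (alpha z \in s).
Proof.
move=> s_nonempty.
case: (pickP [pred z | connect (dual s) r z && ((z \in s) || (alpha z \in s))]).
  by move=> z /andP[]; exists z.
move=> none.
(* Otherwise the region of r is closed under [map_rel], so it contains the circuit. *)
have off_s z : connect (dual s) r z -> edge z \notin map edge s.
  by move=> rz; rewrite mem_edges; have := none z; rewrite /= rz /= => ->.
have dual_alpha x : connect (dual s) r x -> connect (dual s) r (alpha x).
  move=> rx; apply: connect_trans (rx) (connect1 _).
  by rewrite /dual_rel_avoid eqxx (off_s _ rx) orbT.
have reach_all y : connect (dual s) r y.
  apply: (connect_stable _ (connect0 _ r) (map_connected r y)) => x z rx.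
  case/orP => /eqP->; last exact: dual_alpha.
  apply: connect_trans (dual_alpha _ rx) (connect1 _).
  by rewrite /dual_rel_avoid /phi permM alphaK eqxx.
have [t ts] : exists t, t \in s.
  by move: s_nonempty; case: (s) => // t s' _; exists t; rewrite mem_head.
by have := none t; rewrite /= reach_all ts.
Qed.

Let ccw_at s z : circuit s -> z \in s -> connect (dual s) z r ->
  exists s', ccw_circuit sigma alpha r w s'.
Proof.
move=> s_circuit /rot_to[i s' rot_s] zr; exists (rot i s); split; first exact: circuit_rot.
rewrite rot_s; apply: etrans zr; apply: eq_connect; apply: dual_eq => x.
by rewrite -rot_s map_rot mem_rot.
Qed.

Lemma ccw_of_two_way_circuit s : circuit s -> all (fun h => 0 < w h) s ->
  exists s', ccw_circuit sigma alpha r w s'.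
Proof.
move=> s_circuit two_way.
(* The circuit, reversed if needed, is rotated to start at a dart z bordering the root region. *)
have [z rz /orP[zs|azs]] := dual_region_meets_circuit (let: And5 ne _ _ _ _ := s_circuit in ne).
  exact: ccw_at s_circuit zs (dual_connect_sym rz).
apply: (ccw_at (z := z) (circuit_rev s_circuit two_way)).
  by rewrite -[z]alphaK map_f // mem_rev.
have edges_rev : map edge (map alpha (rev s)) =i map edge s.
  by move=> x; rewrite -map_comp (eq_map edgeA) map_rev mem_rev.
by rewrite (eq_connect (dual_eq edges_rev)); exact: dual_connect_sym.
Qed.

End Circuits.

Section PlanarOrientation.
Variables (D : finType) (sigma alpha : {perm D}) (r : D) (w : D -> nat) (d : nat).
Hypothesis d_even : ~~ odd d.
Hypothesis d_ge4 : 4 <= d.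
Hypothesis planar : is_planar_map sigma alpha.
Hypothesis angulation : is_d_angulation sigma alpha d.
Hypothesis orientation : is_d_dm2_orientation sigma alpha r w d.

Local Notation phi := (phi sigma alpha).
Local Notation vtx := (vertex_of sigma).
Local Notation R := (root_face sigma alpha r).
Local Notation outer_edge := (outer_edge sigma alpha r).
Local Notation outer_vertex := (outer_vertex sigma alpha r).

Let alphaK h : alpha (alpha h) = h. Proof. by case: planar. Qed.
Let alpha_neq h : alpha h != h. Proof. by case: planar. Qed.
Let map_connected x y : connect (map_rel sigma alpha) x y. Proof. by case: planar. Qed.
Let euler : #|porbits sigma| + #|porbits phi| = #|D| %/ 2 + 2.
Proof. by case: planar. Qed.
Let edge_w h : edge_weight alpha w h = if outer_edge h then 1 else d - 2.
Proof. by case: orientation. Qed.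
Let vertex_w h : vertex_weight sigma w h = if outer_vertex h then 1 else d.
Proof. by case: orientation. Qed.

Let phiE h : phi h = sigma (alpha h). Proof. by rewrite /phi permM. Qed.
Let outer_edgeA h : outer_edge (alpha h) = outer_edge h.
Proof. by rewrite /outer_edge alphaK orbC. Qed.
Let sigma_vtx h : sigma h \in vtx h.
Proof. by rewrite porbit_step ?porbit_id. Qed.
Let vtx_eq x y : x \in vtx y -> vtx x = vtx y.
Proof. by rewrite /vertex_of -eq_porbit_mem => /eqP. Qed.
Let outer_vertex_eq x y : x \in vtx y -> outer_vertex x = outer_vertex y.
Proof. by move=> /vtx_eq; rewrite /outer_vertex => ->. Qed.
Let outer_edge_vertex h : outer_edge h -> outer_vertex h.
Proof.
case/orP=> in_R; apply/existsP; first by exists h; rewrite porbit_id.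
by exists (sigma h); rewrite sigma_vtx -[h in sigma h]alphaK -phiE porbit_step.
Qed.

Let meets_root (O : {set D}) := [exists x in O, x \in R].
Let outer_vertices := [set O in porbits sigma | meets_root O].
Let inner_vertices := [set O in porbits sigma | ~~ meets_root O].

Let card_vertices : #|outer_vertices| + #|inner_vertices| = #|porbits sigma|.
Proof.
rewrite -(cardsID [set O | meets_root O] (porbits sigma)).
by congr (_ + _); apply: eq_card => O; rewrite !inE // andbC.
Qed.

Let sum_weight_vertices : \sum_h w h = #|outer_vertices| + d * #|inner_vertices|.
Proof.
rewrite (big_porbits _ sigma).
rewrite (eq_bigr (fun O => if meets_root O then 1 else d)); last first.
  by move=> O /imsetP[y _ ->]; exact: vertex_w.
rewrite (bigID meets_root) /=; congr (_ + _).
  rewrite (eq_bigr (fun=> 1)) ?sum1_card; last by move=> O /andP[_ ->].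
  by apply: eq_card => O; rewrite !inE.
rewrite (eq_bigr (fun=> d)) ?sum_nat_const; last by move=> O /andP[_ /negbTE ->].
by rewrite mulnC; congr (_ * _); apply: eq_card => O; rewrite !inE.
Qed.

Let sum_weight_outer_vertices : \sum_(h | outer_vertex h) w h = #|outer_vertices|.
Proof.
rewrite big_mkcond (big_porbits _ sigma).
rewrite (eq_bigr (fun O => if meets_root O then 1 else 0)); last first.
  move=> O /imsetP[y _ ->]; rewrite (eq_bigr (fun h => if outer_vertex y then w h else 0)).
    have -> : meets_root (vtx y) = outer_vertex y by [].
    by have := vertex_w y; case: (outer_vertex y) => // _; rewrite big1.
  by move=> h /outer_vertex_eq ->.
by rewrite -big_mkcondr sum1_card; apply: eq_card => O; rewrite !inE.
Qed.

Let outer_darts := [set h | outer_edge h].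

Let sum_weight_edges : 2 * \sum_h w h = #|outer_darts| + (d - 2) * #|~: outer_darts|.
Proof.
rewrite mul2n -addnn {2}(reindex_inj (@perm_inj _ alpha)) -big_split /=.
rewrite (eq_bigr (fun h => if outer_edge h then 1 else d - 2)); last by move=> h _; exact: edge_w.
rewrite (bigID outer_edge) /= (eq_bigr (fun=> 1)) ?sum1_card; last by move=> h ->.
rewrite (eq_bigr (fun=> d - 2)) ?sum_nat_const; last by move=> h /negbTE ->.
by rewrite mulnC; congr (_ + _ * _); apply: eq_card => h; rewrite !inE.
Qed.

Let sum_weight_outer_edges : 2 * \sum_(h | outer_edge h) w h = #|outer_darts|.
Proof.
rewrite mul2n -addnn {2}(reindex_inj (@perm_inj _ alpha)) /=.
rewrite (eq_bigl outer_edge) => [|h]; last by rewrite outer_edgeA.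
rewrite -big_split /= (eq_bigr (fun=> 1)) ?sum1_card; last first.
  by move=> h oh; have := edge_w h; rewrite oh.
by apply: eq_card => h; rewrite !inE.
Qed.

Let card_darts_faces : #|D| = d * #|porbits phi|.
Proof.
transitivity (\sum_(h : D) 1); first by rewrite -sum1_card; apply: eq_bigl.
rewrite (big_porbits _ phi) mulnC -sum_nat_const.
by apply: eq_bigr => O /imsetP[y _ ->]; rewrite sum1_card; exact: angulation.
Qed.

Let card_outer_darts : #|outer_darts| <= 2 * d.
Proof.
apply: leq_trans (_ : #|R :|: alpha @^-1: R| <= _).
  by apply: subset_leq_card; apply/subsetP => h; rewrite !inE.
rewrite cardsU card_preimset; last exact: perm_inj.
by rewrite (angulation r); lia.
Qed.

(* The boundary walk of the root face is connected: each new vertex it reaches costs two new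
   outer half-edges. *)
Let card_outer_vertices : 2 * #|outer_vertices| <= #|outer_darts| + 2.
Proof.
pose xs i := iter i phi r.
have xs_step i : vtx (xs i.+1) = vtx (alpha (xs i)).
  by apply: vtx_eq; rewrite /xs iterS phiE sigma_vtx.
have xs_R i : xs i \in R by rewrite /xs -permX mem_porbit.
apply: leq_trans (_ : 2 * #|walk_vertices vtx xs d.-1| <= _); last first.
  apply: leq_trans (card_walk_vertices alphaK alpha_neq xs_step _) _.
  rewrite leq_add2r; apply: subset_leq_card; apply/subsetP => y.
  by case/walk_dartsP=> i _ [->|->]; rewrite inE /outer_edge ?alphaK xs_R ?orbT.
rewrite leq_mul2l /=; apply: subset_leq_card; apply/subsetP => O.
rewrite inE => /andP[/imsetP[y _ ->] /existsP[x /andP[xy xR]]].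
rewrite -[porbit sigma y]/(vtx y) -(vtx_eq xy).
move: xR; rewrite /root_face /face_of porbit_traject angulation => /trajectP[i lt_id ->].
by apply: mem_walk_vertices; rewrite -ltnS prednK // (leq_trans _ lt_id).
Qed.

Lemma inner_weight_at_outer_vertex h : outer_vertex h -> ~~ outer_edge h -> w h = 0.
Proof.
move=> ov_h ie_h.
have outer_count : 2 * #|outer_vertices| = #|outer_darts|.
  apply: (outer_count_arith (F := #|porbits phi|) (W := #|inner_vertices|) d_even d_ge4
           _ _ sum_weight_vertices sum_weight_edges) => //.
  - by rewrite cardsC card_darts_faces.
  - by rewrite card_vertices cardsC euler.
have split_outer : \sum_(h | outer_vertex h) w h =
    \sum_(h | outer_edge h) w h + \sum_(h | outer_vertex h && ~~ outer_edge h) w h.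
  rewrite (bigID outer_edge) /=; congr (_ + _); apply: eq_bigl => x.
  by case: (boolP (outer_edge x)) => [/outer_edge_vertex->|]; rewrite ?andbT ?andbF.
have : \sum_(h | outer_vertex h && ~~ outer_edge h) w h = 0.
  by move: split_outer sum_weight_outer_edges; rewrite sum_weight_outer_vertices; lia.
by move/eqP; rewrite sum_nat_eq0 => /forallP/(_ h); rewrite ov_h ie_h => /eqP.
Qed.

Let odd_inner h := odd (w h) && ~~ outer_edge h.

Let odd_innerA h : odd_inner (alpha h) = odd_inner h.
Proof.
rewrite /odd_inner outer_edgeA; case: (boolP (outer_edge h)) => [_|inner]; rewrite ?andbF ?andbT //.
have := even_subn2 d_even; have := edge_w h; rewrite /edge_weight (negbTE inner) => <-.
by rewrite oddD; case: odd; case: odd.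
Qed.

Let odd_inner_next y :
  odd_inner y -> exists z, [&& z \in vtx (alpha y), z != alpha y & odd_inner z].
Proof.
rewrite -odd_innerA; set v := alpha y => /andP[odd_v inner_v].
case: (pickP [pred z | [&& z \in vtx v, z != v & odd_inner z]]) => [z zP|none].
  by exists z.
have inner_vertex : ~~ outer_vertex v.
  by apply: contraL odd_v => /inner_weight_at_outer_vertex/(_ inner_v)->.
have := vertex_w v; rewrite (negbTE inner_vertex) /vertex_weight (bigD1 v) ?porbit_id //= => sum_v.
suff /negbTE even_rest : ~~ odd (\sum_(x in vtx v | x != v) w x).
  by move: d_even; rewrite -sum_v oddD odd_v even_rest.
apply: (big_ind (fun n => ~~ odd n)) => // [m n|x /andP[xv xnv]].
  by rewrite oddD => /negbTE-> /negbTE->.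
have := none x; rewrite /= xv xnv /= /odd_inner => /negbT; rewrite negb_and negbK => /orP[//|].
by move/outer_edge_vertex; rewrite (outer_vertex_eq xv) (negbTE inner_vertex).
Qed.

Let next y := odflt y [pick z | [&& z \in vtx (alpha y), z != alpha y & odd_inner z]].

Let nextP y :
  odd_inner y -> [&& next y \in vtx (alpha y), next y != alpha y & odd_inner (next y)].
Proof.
move=> odd_y; rewrite /next; case: pickP => [z -> //|none].
by have [z zP] := odd_inner_next odd_y; rewrite none in zP.
Qed.

Let odd_inner_iter k x : odd_inner x -> odd_inner (iter k next x).
Proof. by elim: k => //= k IH /IH /nextP /and3P[]. Qed.

Let next_consecutive x : odd_inner x -> consecutive sigma alpha x (next x).
Proof. by case/nextP/and3P => xv _ _; rewrite /consecutive /vertex_of porbit_sym. Qed.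

Lemma odd_inner_circuit h : odd_inner h ->
  exists s, is_circuit sigma alpha w s /\ all odd_inner s.
Proof.
move=> odd_h; have [m [n /= [closed_v inj_v]]] := iter_key_cycle next vtx h.
set y := iter m next h in closed_v inj_v; pose Y k := iter k next y.
have odd_Y k : odd_inner (Y k) by rewrite /Y /y -iterD odd_inner_iter.
have vtx_Y k : vtx (Y k.+1) = vtx (alpha (Y k)).
  by apply: vtx_eq; case/and3P: (nextP (odd_Y k)).
(* A repeated edge would repeat a vertex or step back along [alpha]. *)
have edge_Y a b : a < b < n.+1 -> edge_of alpha (Y a) != edge_of alpha (Y b).
  case/andP=> lt_ab lt_b; apply/negP => /eqP e.
  have : Y b \in edge_of alpha (Y a) by rewrite e !inE eqxx.
  rewrite !inE => /orP[/eqP|/eqP] eYb.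
    have eab : a = b by apply: inj_v; rewrite ?inE ?(ltn_trans lt_ab) //= -/(Y a) -/(Y b) eYb.
    by rewrite eab ltnn in lt_ab.
  have eab : a.+1 = b.
    by apply: inj_v; rewrite ?inE ?(leq_ltn_trans lt_ab) //= -/(Y b) -/(Y a.+1) vtx_Y eYb.
  by case/and3P: (nextP (odd_Y a)) => _ /negP[]; rewrite -[next _]/(Y a.+1) eab eYb.
exists (traject next y n.+1); split; last by apply/allP => _ /trajectP[k _ ->]; exact: odd_Y.
split.
- by rewrite trajectS.
- by apply/allP => _ /trajectP[k _ ->]; have := odd_Y k; rewrite -odd_innerA => /andP[/odd_gt0].
- rewrite trajectS /= rcons_path last_traject; apply/andP; split.
    apply: (sub_in_path (P := odd_inner)) (fpath_traject next y n).
      by move=> a b odd_a _ /eqP<-; exact: next_consecutive.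
    by rewrite -trajectS; apply/allP => _ /trajectP[k _ ->]; exact: odd_Y.
  by rewrite /consecutive -closed_v -/(Y n.+1) vtx_Y porbit_id.
- exact: uniq_map_traject.
- apply: uniq_map_traject => a b; rewrite !inE => lt_a lt_b eab.
  case: (ltngtP a b) => [lt_ab|lt_ba|//].
    by have := edge_Y a b; rewrite lt_ab lt_b => /(_ isT)/eqP/(_ eab).
  by have := edge_Y b a; rewrite lt_ba lt_a => /(_ isT)/eqP/(_ (esym eab)).
Qed.

Lemma minimal_orientation_inner_even h :
  is_minimal sigma alpha r w -> ~~ outer_edge h -> ~~ odd (w h).
Proof.
move=> minimal inner_h; apply/negP => odd_h.
have [s [s_circuit odd_s]] := @odd_inner_circuit h (introT andP (conj odd_h inner_h)).
have two_way : all (fun x => 0 < w x) s by apply: sub_all odd_s => x /andP[/odd_gt0].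
have [s' ccw] := ccw_of_two_way_circuit r alphaK map_connected s_circuit two_way.
exact: minimal ccw.
Qed.

End PlanarOrientation.

Import GRing.Theory.

Section TreeParity.
Local Open Scope ring_scope.

Lemma natrF2_eq0 n : ((n%:R : 'F_2) == 0) = ~~ odd n.
Proof. by rewrite Zp_nat -val_eqE /= modn2; case: odd. Qed.

Lemma eqF2_add0 (a b : 'F_2) : (a + b == 0) = (a == b).
Proof. by rewrite addr_eq0 oppr_pchar2 ?pchar_Fp. Qed.

Lemma sum_mul_indicator (R : nzSemiRingType) (T : finType) (F : T -> R) a :
  \sum_v F v * (a == v)%:R = F a.
Proof.
rewrite (bigD1 a) //= eqxx mulr1 big1 ?addr0 // => v.
by rewrite eq_sym => /negbTE ->; rewrite mulr0.
Qed.

Variables (E V : finType) (src dst : E -> V).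

Definition adjacent : rel V :=
  fun u v => [exists e, ((src e == u) && (dst e == v)) || ((src e == v) && (dst e == u))].

Definition incidence_mx : 'M['F_2]_(#|E|, #|V|) :=
  \matrix_(i, j) ((src (enum_val i) == enum_val j)%:R + (dst (enum_val i) == enum_val j)%:R).

Lemma sum_incidence (F : V -> 'F_2) i :
  \sum_j F (enum_val j) * incidence_mx i j = F (src (enum_val i)) + F (dst (enum_val i)).
Proof.
rewrite (reindex enum_rank) /=; last by exists enum_val => v _; rewrite ?enum_valK ?enum_rankK.
under eq_bigr => v _ do rewrite mxE enum_rankK mulrDr.
by rewrite big_split /= !sum_mul_indicator.
Qed.

Hypothesis connected : forall u v, connect adjacent u v.
Hypothesis fewer_edges : (#|E| < #|V|)%N.

Lemma incidence_coker_const (u : 'rV['F_2]_#|V|) j0 :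
  u *m incidence_mx^T = 0 -> u = u 0 j0 *: const_mx 1.
Proof.
move=> uA; pose f v := u 0 (enum_rank v).
have f_adj x y : adjacent x y -> f x = f y.
  have f_edge e : f (src e) = f (dst e).
    apply/eqP; rewrite -eqF2_add0.
    have := congr1 (fun M : 'rV_#|E| => M 0 (enum_rank e)) uA.
    rewrite !mxE; under eq_bigr => j _ do rewrite mxE -{1}[j]enum_valK.
    by rewrite (sum_incidence f) enum_rankK => ->.
  by case/existsP=> e /orP[] /andP[/eqP<- /eqP<-].
apply/rowP => j; rewrite !mxE mulr1 -[j]enum_valK -[j0]enum_valK.
have f_closed : closed adjacent [pred x | f x == f (enum_val j0)].
  by move=> x y /f_adj; rewrite !inE => ->.
have := closed_connect f_closed (connected (enum_val j0) (enum_val j)).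
by rewrite !inE eqxx => /esym/eqP.
Qed.

Lemma row_free_incidence : row_free incidence_mx.
Proof.
have j0 : 'I_#|V| by apply: (@Ordinal _ 0); lia.
have ker_le1 : (\rank (kermx incidence_mx^T) <= 1)%N.
  pose one : 'rV['F_2]_#|V| := const_mx 1.
  apply: leq_trans (mxrankS (_ : kermx incidence_mx^T <= one)%MS) (rank_leq_row _).
  apply/row_subP => i.
  rewrite (@incidence_coker_const (row i (kermx incidence_mx^T)) j0) ?scalemx_sub //.
  by rewrite -row_mul mulmx_ker row0.
rewrite /row_free -mxrank_tr; apply/eqP/anti_leq; rewrite rank_leq_col.
move: ker_le1; rewrite mxrank_ker leq_subLR addn1 => le_V.
by rewrite -ltnS (leq_trans fewer_edges).
Qed.

Lemma even_edge_labelling (x : E -> nat) :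
  (forall v, ~~ odd (\sum_(e | src e == v) x e + \sum_(e | dst e == v) x e)) ->
  forall e, ~~ odd (x e).
Proof.
move=> even_v e.
pose xr : 'rV['F_2]_#|E| := \row_i (x (enum_val i))%:R.
have xA : xr *m incidence_mx = 0.
  apply/rowP => j; rewrite !mxE; apply/eqP.
  under eq_bigr => i _ do rewrite !mxE mulrDr -!natrM.
  rewrite big_split /= -!natr_sum -natrD natrF2_eq0.
  rewrite -(big_enum_val (fun e => x e * (src e == enum_val j))).
  rewrite -(big_enum_val (fun e => x e * (dst e == enum_val j))).
  suff sum_sel f : \sum_(e in E) x e * (f e == enum_val j) = \sum_(e | f e == enum_val j) x e.
    by rewrite !sum_sel.
  rewrite [RHS]big_mkcond; apply: eq_big => // e0 _.
  by case: (f e0 == enum_val j); [exact: muln1 | exact: muln0].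
have /(row_free_inj row_free_incidence) xr0 : xr *m incidence_mx = 0 *m incidence_mx.
  by rewrite xA mul0mx.
have := congr1 (fun M : 'rV_#|E| => M 0 (enum_rank e)) xr0.
by rewrite !mxE enum_rankK => /eqP; rewrite natrF2_eq0.
Qed.
End TreeParity.

Section MobileParity.
Variables (D V : finType) (vert : D -> V) (sigma alpha : {perm D}).
Variables (bud : pred D) (black : pred V) (w : D -> nat) (d : nat).
Hypothesis d_even : ~~ odd d.
Hypothesis branching : is_d_branching vert sigma alpha bud black w d.

Let alphaK h : alpha (alpha h) = h.
Proof. by case: branching => [[[[]]]]. Qed.

Let alpha_fix h : (alpha h == h) = bud h.
Proof. by case: branching => [[[[]]]]. Qed.

Let budA h : bud (alpha h) = bud h.
Proof. by rewrite -!alpha_fix alphaK eq_sym. Qed.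

Let oddA h : ~~ bud h -> odd (w (alpha h)) = odd (w h).
Proof.
case: branching => _ _ _ /(_ h) edge_w /edge_w /(congr1 odd).
by rewrite oddD (negbTE (even_subn2 d_even)); case: odd; case: odd.
Qed.

(* Each edge of the mobile is represented by its half-edge of smaller [enum_rank]. *)
Definition rep_half_edge (h : D) := ~~ bud h && (enum_rank h < enum_rank (alpha h)).
Local Notation rep := rep_half_edge.

Let repA h : rep (alpha h) = ~~ bud h && ~~ rep h.
Proof.
rewrite /rep budA; case: (boolP (bud h)) => //= nb.
have ne : (enum_rank (alpha h) : nat) != enum_rank h.
  by rewrite (inj_eq val_inj) (inj_eq enum_rank_inj) alpha_fix.
by rewrite alphaK -leqNgt ltn_neqAle ne.
Qed.

Let non_bud_rep h : ~~ bud h = rep h || rep (alpha h).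
Proof. by rewrite repA; case: (boolP (rep h)) => [/andP[]|]; rewrite ?andbT. Qed.

Let card_rep : #|rep|.+1 = #|V|.
Proof.
have card_nonbud : #|[pred h | ~~ bud h]| = #|rep| + #|rep|.
  rewrite -(cardID rep); congr (_ + _).
    by apply: eq_card => h; rewrite !inE unfold_in; case: (bud h).
  rewrite -(card_image (@perm_inj _ alpha) rep); apply: eq_card => h.
  rewrite -[h in RHS]alphaK mem_image; last exact: perm_inj.
  by rewrite !inE -!topredE /= repA andbC.
by case: branching => [[[_ _ _ _]]]; rewrite card_nonbud; lia.
Qed.

Let src (i : 'I_#|rep|) := vert (enum_val i).
Let dst (i : 'I_#|rep|) := vert (alpha (enum_val i)).

Let tree_rel_adjacent u v : tree_rel vert alpha bud u v -> adjacent src dst u v.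
Proof.
case/existsP=> h /and3P[nb /eqP<- /eqP<-]; apply/existsP.
have [rh|rah] := orP (eqbLR (non_bud_rep h) nb).
  by exists (enum_rank_in rh h); rewrite /src /dst enum_rankK_in // !eqxx.
by exists (enum_rank_in rah (alpha h)); rewrite /src /dst enum_rankK_in // alphaK !eqxx orbT.
Qed.

Let even_vertex v :
  ~~ odd (\sum_(i | src i == v) w (enum_val i) + \sum_(i | dst i == v) w (enum_val i)).
Proof.
rewrite /src /dst -(big_enum_val_cond (A := rep) (fun h => vert h == v) w).
rewrite -(big_enum_val_cond (A := rep) (fun h => vert (alpha h) == v) w).
have odd_dst : odd (\sum_(h in rep | vert (alpha h) == v) w h) =
               odd (\sum_(h in rep | vert (alpha h) == v) w (alpha h)).
  by apply: odd_sum_eq => h /andP[rh _]; rewrite oddA //; case/andP: rh.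
rewrite oddD odd_dst -oddD.
have -> : \sum_(h in rep | vert (alpha h) == v) w (alpha h) =
          \sum_(h | (vert h == v) && ~~ bud h && ~~ rep h) w h.
  rewrite (reindex_inj (@perm_inj _ alpha)); apply: eq_big => h /=; rewrite alphaK //.
  by rewrite -topredE /= repA andbC andbA.
have -> : \sum_(h in rep | vert h == v) w h =
          \sum_(h | (vert h == v) && ~~ bud h && rep h) w h.
  by apply: eq_bigl => h; rewrite -topredE /= /rep; case: (bud h); rewrite ?andbF // andbC andbA.
rewrite -bigID -/(mvertex_weight vert bud w v).
case: branching => [[_ N_weight] _ white_weight _].
case: (boolP (black v)) => [bv|/white_weight-> //].
rewrite /mvertex_weight big1 // => h /andP[/eqP vh nb].
by apply/eqP; rewrite -leqn0 leqNgt N_weight // vh bv.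
Qed.

Lemma mobile_weight_even h : ~~ bud h -> ~~ odd (w h).
Proof.
have tree_connected u v : connect (adjacent src dst) u v.
  case: branching => [[[_ _ _ conn _] _] _ _ _].
  by apply: connect_sub (conn u v) => x y /tree_rel_adjacent /connect1.
have fewer_edges : #|'I_#|rep| | < #|V| by rewrite card_ord -card_rep.
have even_src := even_edge_labelling tree_connected fewer_edges even_vertex.
move=> nb; move: (nb); rewrite non_bud_rep => /orP[] rh.
  by have := even_src (enum_rank_in rh h); rewrite enum_rankK_in.
by have := even_src (enum_rank_in rh (alpha h)); rewrite enum_rankK_in // oddA.
Qed.
End MobileParity.

Theorem proposition16 (d : nat) (d_even : ~~ odd d) (d_ge4 : 4 <= d) :
  (forall (D V : finType) (vert : D -> V) (sigma alpha : {perm D})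
          (bud : pred D) (black : pred V) (w : D -> nat),
     is_d_branching vert sigma alpha bud black w d ->
     forall h, ~~ bud h -> ~~ odd (w h) && (w h <= d - 2))
  /\
  (forall (D : finType) (sigma alpha : {perm D}) (r : D) (w : D -> nat),
     is_planar_map sigma alpha ->
     is_d_angulation sigma alpha d ->
     is_d_dm2_orientation sigma alpha r w d ->
     is_minimal sigma alpha r w ->
     forall h, ~~ outer_edge sigma alpha r h -> ~~ odd (w h)).
Proof.
split.
- move=> D V vert sigma alpha bud black w branching h nb.
  rewrite (mobile_weight_even d_even branching nb) /=.
  by case: branching => _ _ _ /(_ h nb) <-; exact: leq_addr.
- move=> D sigma alpha r w planar angulation orientation minimal h.
  exact: (minimal_orientation_inner_even d_even d_ge4 planar angulation orientation minimal).
Qed.
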